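(* Let $1\le k\le d$ be integers, let $(p_m)_{m\in\mathbb Z}$ be the sequence defined below, and let $a,b,\mu$ be integers with $k+a\ge0$. Then $$\sum_{m=-\infty}^{\mu}p_{\mu-m}\binom{d+a}{m+b}=\sum_{m=-b}^{\mu}(d-k)^{\mu-m}\binom{k+a}{m+b}$$ (both sums have finitely many nonzero terms; an empty sum is $0$).
   Context: Sequence: $p_m=0$ for $m<0$, $p_0=1$, and $p_m=\sum_{\ell=1}^{m}(\ell-1)\binom{d-k+1}{\ell}p_{m-\ell}$ for $m\ge1$. Conventions: $0^0=1$; for integers $N\ge0$, $\binom{N}{r}$ is the usual binomial coefficient for $0\le r\le N$ and $0$ for $r<0$ or $r>N$. *)

From mathcomp Require Import all_boot all_order all_algebra.
Set Implicit Arguments. Unset Strict Implicit. Unset Printing Implicit Defensive.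
Import Order.TTheory GRing.Theory Num.Theory.

Definition binZ (N : nat) (r : int) : nat :=
  match r with Posz n => 'C(N, n) | Negz _ => 0%N end.

Definition extZ (p : nat -> nat) (m : int) : nat :=
  match m with Posz n => p n | Negz _ => 0%N end.

Definition sumZ (lo hi : int) (f : int -> nat) : nat :=
  if (lo <= hi)%R then \sum_(i < (`|hi - lo|%N).+1) f (lo + (i : nat)%:Z)%R
  else 0%N.

From mathcomp Require Import all_boot all_order all_algebra.
From mathcomp Require Import zify.
Import Order.TTheory GRing.Theory Num.Theory.

(* In generating-function terms, with [P(x) = sum p_m x^m] and [n = d - k],
   the recurrence says [P (1+x)^(n+1) = 1 + (n+1) x P (1+x)^n], i.e.
   [Q (1+x) = 1 + (n+1) x Q] for [Q = P (1+x)^n], so [Q = 1/(1 - n x)].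
   Multiplying by [(1+x)^K] with [K = k + a] gives
   [P (1+x)^(K+n) = (1+x)^K / (1 - n x)]; both sides of the theorem are the
   coefficients of [x^(mu+b)] of this identity. *)

Definition convn (f g : nat -> nat) (N : nat) : nat :=
  \sum_(j < N.+1) f (N - j) * g j.

Lemma convn_pascal f g g' N :
  g' 0 = g 0 -> (forall j, g' j.+1 = g j.+1 + g j) ->
  convn f g' N.+1 = convn f g N.+1 + convn f g N.
Proof.
move=> g'0 g'S; rewrite /convn big_ord_recl [in X in _ = X + _]big_ord_recl /=.
rewrite g'0 -addnA; congr (_ + _).
under eq_bigr => i _ do rewrite /bump /= add1n g'S mulnDr subSS.
by rewrite big_split.
Qed.

Lemma convn_binS f n N :
  convn f (binomial n.+1) N.+1 = convn f (binomial n) N.+1 + convn f (binomial n) N.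
Proof. by apply: convn_pascal => [|j]; rewrite ?bin0 ?binS. Qed.

Section BinomialRecurrence.

Variables (n : nat) (p : nat -> nat).
Hypothesis p0 : p 0 = 1.
Hypothesis p_rec : forall m, 0 < m ->
  p m = \sum_(1 <= l < m.+1) (l - 1) * 'C(n + 1, l) * p (m - l).

(* The recurrence combined with [l * 'C(n+1, l) = (n+1) * 'C(n, l-1)]. *)
Lemma convn_binS_rec M :
  convn p (binomial n.+1) M.+1 = n.+1 * convn p (binomial n) M.
Proof.
rewrite /convn big_ord_recl /= subn0 bin0 muln1 (p_rec _ (ltn0Sn M)).
rewrite big_add1 /= big_mkord -big_split /= big_distrr /=.
apply: eq_bigr => i _; rewrite /bump /= add1n !subSS subn0 addn1.
by rewrite (mulnC (p _)) -mulnDl -mulSnr -mul_bin_diag /= mulnAC mulnA.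
Qed.

Lemma convn_binomial_pow N : convn p (binomial n) N = n ^ N.
Proof.
elim: N => [|M IH]; first by rewrite /convn big_ord1 /= p0 bin0.
have := convn_binS p n M; rewrite convn_binS_rec IH expnS; lia.
Qed.

Lemma convn_binomial_addn K N :
  convn p (binomial (K + n)) N = convn (expn n) (binomial K) N.
Proof.
elim: K N => [|K IH] N.
  rewrite add0n convn_binomial_pow /convn big_ord_recl /= bin0 subn0 muln1.
  by rewrite big1 ?addn0 // => i _; rewrite bin0n muln0.
case: N => [|N]; first by rewrite /convn !big_ord1 /= !bin0 subnn p0.
by rewrite addSn !convn_binS !IH.
Qed.

End BinomialRecurrence.

Lemma sumZ_convn (F G : int -> nat) (b mu : int) : (- b <= mu)%R ->
  sumZ (- b) mu (fun m => F (mu - m)%R * G (m + b)%R)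
  = convn (fun i => F i) (fun j => G j) `|(mu + b)%R|.
Proof.
move=> le_b_mu; rewrite /sumZ le_b_mu opprK.
apply: eq_bigr => -[i lt_i] _ /=; congr (F _ * G _); lia.
Qed.

Theorem lemma4 (d k : nat) (p : nat -> nat) (a b mu : int) :
  (1 <= k)%N -> (k <= d)%N ->
  p 0%N = 1%N ->
  (forall m : nat, (1 <= m)%N ->
     p m = (\sum_(1 <= l < m.+1) (l - 1) * 'C(d - k + 1, l) * p (m - l))%N) ->
  (0 <= Posz k + a)%R ->
  sumZ (- b)%R mu
    (fun m => muln (extZ p (mu - m)%R) (binZ (absz (Posz d + a)%R) (m + b)%R))
  = sumZ (- b)%R mu
    (fun m => muln (expn (d - k) (absz (mu - m)%R))
                   (binZ (absz (Posz k + a)%R) (m + b)%R)).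
Proof.
move=> _ le_k_d p0 p_rec ka_ge0.
have [le_b_mu | lt_mu_b] := lerP (- b) mu; last by rewrite /sumZ leNgt lt_mu_b.
rewrite sumZ_convn // (sumZ_convn (fun z => (d - k) ^ `|z|)) //.
have -> : `|(Posz d + a)%R| = (`|(Posz k + a)%R| + (d - k))%N by lia.
exact: convn_binomial_addn.
Qed.
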